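(* For $j\in\mathbb{Z}_{\ge0}$, setting $U_j(x,y)=\sum_{l_1\ge0}\sum_{l_2\ge j}\beta_E(l_1+l_2+1)\beta_E(l_2)x^{l_1}y^{l_2}$ and $B_j(y)=\sum_{l\ge0}\beta_E(l+j)^2y^l$, one has \[ U_j(x,y)=y^j\cdot\frac{(q^{-1}\lambda-q^{-1}x-q^{-2}xy)B_j(y)+\beta_E(j)\beta_E(j+1)-q^{-1}\lambda\,\beta_E(j)^2}{(1-\lambda q^{-1}x+q^{-1}x^2)(1+q^{-1}y)}. \]
   Context: $F$ is a $p$-adic field with odd residue cardinality $q$, uniformizer $\varpi$. $\pi$ is an irreducible unitary unramified representation of $\mathrm{GL}_2(F)$ with trivial central character, a quotient of $\chi\times\chi^{-1}$ with $\chi$ unramified; $\alpha=\chi(\varpi)$, $\lambda=q^{1/2}(\alpha+\alpha^{-1})$. $\phi$ is the spherical unit vector, $E$ a quadratic étale algebra over $F$, $\alpha_E(\phi_1,\phi_2)=\int_{F^\times\backslash E^\times}\langle\pi(t)\phi_1,\phi_2\rangle d^\times t$ with $\alpha_E(\phi,\phi)\ne0$, and $\beta_E(l)=\alpha_E(\pi(\mathrm{diag}(\varpi^{-l},1))\phi,\phi)/\alpha_E(\phi,\phi)$, satisfying $q\beta_E(l+2)-\lambda\beta_E(l+1)+\beta_E(l)=0$. *)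

From HB Require Import structures.
From mathcomp Require Import all_boot all_order all_algebra.
Set Implicit Arguments. Unset Strict Implicit. Unset Printing Implicit Defensive.
Import Order.TTheory GRing.Theory Num.Theory.
Local Open Scope ring_scope.

(* Formal power series in two variables x, y over a ring R:
   f m n is the coefficient of x^m y^n. *)
Definition fps2 (R : Type) := nat -> nat -> R.

Section FPS2.
Variable R : pzRingType.

Definition fps2_const (c : R) : fps2 R := fun m n => if (m == 0%N) && (n == 0%N) then c else 0.
Definition fps2_X : fps2 R := fun m n => if (m == 1%N) && (n == 0%N) then 1 else 0.
Definition fps2_Y : fps2 R := fun m n => if (m == 0%N) && (n == 1%N) then 1 else 0.
Definition fps2_add (f g : fps2 R) : fps2 R := fun m n => f m n + g m n.
Definition fps2_opp (f : fps2 R) : fps2 R := fun m n => - f m n.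
Definition fps2_scale (c : R) (f : fps2 R) : fps2 R := fun m n => c * f m n.
Definition fps2_mul (f g : fps2 R) : fps2 R :=
  fun m n => \sum_(i < m.+1) \sum_(k < n.+1) f i k * g (m - i)%N (n - k)%N.
Definition fps2_exp (f : fps2 R) (k : nat) : fps2 R := iter k (fps2_mul f) (fps2_const 1).
End FPS2.

Declare Scope fps2_scope.
Delimit Scope fps2_scope with F.
Notation "f + g" := (fps2_add f g) : fps2_scope.
Notation "- f" := (fps2_opp f) : fps2_scope.
Notation "f - g" := (fps2_add f (fps2_opp g)) : fps2_scope.
Notation "f * g" := (fps2_mul f g) : fps2_scope.
Notation "c *: f" := (fps2_scale c f) : fps2_scope.
Notation "f ^+ k" := (fps2_exp f k) : fps2_scope.
Notation "c %:S" := (fps2_const c) (at level 2, format "c %:S") : fps2_scope.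
Notation "''x'" := (fps2_X _) : fps2_scope.
Notation "''y'" := (fps2_Y _) : fps2_scope.

Definition U_series (R : pzRingType) (beta : nat -> R) (j : nat) : fps2 R :=
  fun l1 l2 => if (j <= l2)%N then beta (l1 + l2).+1 * beta l2 else 0.

Definition B_series (R : pzRingType) (beta : nat -> R) (j : nat) : fps2 R :=
  fun l1 l => if l1 == 0%N then beta (l + j)%N ^+ 2 else 0.

From HB Require Import structures.
From mathcomp Require Import all_boot all_order all_algebra.
From Stdlib Require Import FunctionalExtensionality.
From mathcomp Require Import zify ring.
Import Order.TTheory GRing.Theory Num.Theory.
Local Open Scope ring_scope.

(* For fixed l2 the sequence l1 |-> beta(l1 + l2 + 1) satisfies the recurrence
   whose characteristic polynomial is 1 - (lambda/q) x + (1/q) x^2, so multiplying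
   U_j by it kills every column x^l1 with l1 >= 2 and leaves beta(n+1) beta(n) and
   -(1/q) beta(n)^2 in the columns x^0 and x^1 (n >= j).  Multiplying by
   1 + (1/q) y and using the recurrence once more turns these into the
   coefficients of the numerator.  The argument works for any recurrence
   beta(l+2) = c beta(l+1) - d beta(l) over a commutative ring. *)

Definition fps2_monomial (R : pzRingType) (a b : nat) : fps2 R :=
  fun m n => if (m == a) && (n == b) then 1 else 0.

Section Fps2Algebra.
Variable R : comPzRingType.
Implicit Types f g h : fps2 R.

Local Notation mono := (@fps2_monomial R).

Lemma fps2_ext f g : (forall m n, f m n = g m n) -> f = g.
Proof. by move=> fg; do 2![apply: functional_extensionality => ?]; apply: fg. Qed.

Lemma fps2_mulC f g : (f * g)%F = (g * f)%F.
Proof.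
apply: fps2_ext => m n; rewrite /fps2_mul (reindex_inj rev_ord_inj).
apply: eq_bigr => i _; rewrite (reindex_inj rev_ord_inj); apply: eq_bigr => k _.
have [le_im le_kn] : (i <= m)%N /\ (k <= n)%N by split; [exact: ltn_ord i | exact: ltn_ord k].
by rewrite /= !subSS !subKn // mulrC.
Qed.

Lemma fps2_mulDr f g h : (f * (g + h))%F = (f * g + f * h)%F.
Proof.
apply: fps2_ext => m n; rewrite /fps2_mul /fps2_add -big_split.
by apply: eq_bigr => i _; rewrite -big_split; apply: eq_bigr => k _; rewrite mulrDr.
Qed.

Lemma fps2_mulNr f g : (f * - g)%F = (- (f * g))%F.
Proof.
apply: fps2_ext => m n; rewrite /fps2_mul /fps2_opp -sumrN.
by apply: eq_bigr => i _; rewrite -sumrN; apply: eq_bigr => k _; rewrite mulrN.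
Qed.

Lemma fps2_mulZr c f g : (f * (c *: g))%F = (c *: (f * g))%F.
Proof.
apply: fps2_ext => m n; rewrite /fps2_mul /fps2_scale mulr_sumr.
by apply: eq_bigr => i _; rewrite mulr_sumr; apply: eq_bigr => k _; rewrite mulrCA.
Qed.

Lemma coef_monomial_mul a b f m n :
  (mono a b * f)%F m n =
  if (a <= m)%N && (b <= n)%N then f (m - a)%N (n - b)%N else 0.
Proof.
rewrite /fps2_mul /fps2_monomial.
transitivity (\sum_(i < m.+1 | i == a :> nat)
                \sum_(k < n.+1 | k == b :> nat) f (m - i)%N (n - k)%N).
  rewrite [RHS]big_mkcond; apply: eq_bigr => i _; case: eqP => _ /=.
    by rewrite [RHS]big_mkcond; apply: eq_bigr => k _; case: eqP; rewrite ?mul1r ?mul0r.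
  by rewrite big1 // => k _; rewrite mul0r.
rewrite (big_ord1_eq _ (fun i => \sum_(k < n.+1 | k == b :> nat) f (m - i)%N (n - k)%N)).
by rewrite (big_ord1_eq _ (fun k => f (m - a)%N (n - k)%N)) !ltnS; case: (a <= m)%N.
Qed.

Lemma coef_mul_monomial a b f m n :
  (f * mono a b)%F m n =
  if (a <= m)%N && (b <= n)%N then f (m - a)%N (n - b)%N else 0.
Proof. by rewrite fps2_mulC coef_monomial_mul. Qed.

Lemma fps2_monomialM a b a' b' : (mono a b * mono a' b')%F = mono (a + a') (b + b').
Proof.
apply: fps2_ext => m n; rewrite coef_monomial_mul /fps2_monomial.
have -> : ((m == a + a') && (n == b + b'))%N =
           [&& (a <= m)%N, (b <= n)%N, (m - a == a')%N & (n - b == b')%N].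
  apply/andP/and4P => [[/eqP-> /eqP->]|[am bn /eqP<- /eqP<-]].
    by rewrite !leq_addr !addKn.
  by rewrite !subnKC.
by case: (a <= m)%N; case: (b <= n)%N.
Qed.

Lemma fps2_monomialX a b k : ((mono a b) ^+ k)%F = mono (a * k) (b * k).
Proof.
elim: k => [|k IHk]; first by rewrite !muln0.
by rewrite /fps2_exp iterS -/(fps2_exp _ k) IHk fps2_monomialM !mulnS.
Qed.

Lemma fps2_mulr1 f : (f * 1%:S)%F = f.
Proof. by apply: fps2_ext => m n; rewrite (coef_mul_monomial 0 0) !subn0. Qed.

Lemma sum_if_leq_subn (F : nat -> R) a m :
  \sum_(i < m.+1) (if (a <= m - i)%N then F i else 0) =
  if (a <= m)%N then \sum_(i < (m - a).+1) F i else 0.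
Proof.
case: leqP => [le_am | lt_ma]; last by rewrite big1 // => i _; case: leqP => // ?; lia.
rewrite (big_ord_widen m.+1 F) ?ltnS ?leq_subr // [RHS]big_mkcond.
apply: eq_bigr => i _; have := ltn_ord i; rewrite !ltnS => le_im.
by congr (if _ then _ else _); apply/idP/idP => ?; lia.
Qed.

Lemma fps2_mul_monomialA f g a b : (f * (g * mono a b))%F = ((f * g) * mono a b)%F.
Proof.
apply: fps2_ext => m n; rewrite coef_mul_monomial {1}/fps2_mul.
transitivity (\sum_(i < m.+1) if (a <= m - i)%N then
   \sum_(k < n.+1) if (b <= n - k)%N then f i k * g (m - a - i)%N (n - b - k)%N else 0
   else 0).
  apply: eq_bigr => i _; case: leqP => [le_a | lt_a].
    apply: eq_bigr => k _; rewrite coef_mul_monomial le_a /=.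
    by case: leqP; rewrite ?mulr0 // [(m - i - a)%N]subnAC [(n - k - b)%N]subnAC.
  by rewrite big1 // => k _; rewrite coef_mul_monomial leqNgt lt_a mulr0.
under eq_bigr => i _ do
  rewrite (sum_if_leq_subn (fun k => f i k * g (m - a - i)%N (n - b - k)%N)).
case: (b <= n)%N; last by rewrite andbF big1 // => i _; rewrite if_same.
rewrite andbT /fps2_mul.
by rewrite (sum_if_leq_subn (fun i =>
  \sum_(k < (n - b).+1) f i k * g (m - a - i)%N (n - b - k)%N)).
Qed.

Lemma fps2_X_monomial : 'x%F = mono 1 0. Proof. by []. Qed.
Lemma fps2_Y_monomial : 'y%F = mono 0 1. Proof. by []. Qed.

Lemma fps2_const_monomial c : (c%:S)%F = (c *: mono 0 0)%F.
Proof.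
apply: fps2_ext => m n; rewrite /fps2_const /fps2_scale /fps2_monomial.
by case: ifP; rewrite ?mulr1 ?mulr0.
Qed.

Lemma coef_mul_charpoly c d f m n :
  (f * (1%:S - c *: 'x + d *: 'x ^+ 2))%F m n =
  f m n - (if m is m'.+1 then c * f m' n else 0)
        + (if m is m'.+2 then d * f m' n else 0).
Proof.
rewrite !fps2_mulDr fps2_mulNr !fps2_mulZr fps2_mulr1.
rewrite fps2_X_monomial fps2_monomialX /fps2_add /fps2_opp /fps2_scale.
rewrite !coef_mul_monomial mul1n mul0n !subn0.
by case: m => [|[|m]] /=; rewrite ?subSS ?subn0; ring.
Qed.

Lemma coef_mul_mul_1DZy d f g m n :
  (f * (g * (1%:S + d *: 'y)))%F m n =
  (f * g)%F m n + (if (0 < n)%N then d * (f * g)%F m n.-1 else 0).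
Proof.
rewrite fps2_mulDr fps2_mulZr fps2_mulr1 fps2_Y_monomial.
rewrite fps2_mulDr fps2_mulZr fps2_mul_monomialA /fps2_add /fps2_scale.
by rewrite coef_mul_monomial subn0 subn1; case: (0 < n)%N; rewrite ?mulr0.
Qed.

End Fps2Algebra.

Section UBSeriesIdentity.
Variables (R : comPzRingType) (c d : R) (beta : nat -> R) (j : nat).
Hypothesis beta_rec : forall l, beta l.+2 = c * beta l.+1 - d * beta l.

Local Notation kappa := (beta j * beta j.+1 - c * beta j ^+ 2).

Lemma coef_U_series_mul_charpoly m n :
  (U_series beta j * (1%:S - c *: 'x + d *: 'x ^+ 2))%F m n =
  if (j <= n)%N then
    match m with 0 => beta n.+1 * beta n | 1 => - (d * beta n ^+ 2) | _ => 0 end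
  else 0.
Proof.
rewrite coef_mul_charpoly /U_series.
case: leqP => _; last by case: m => [|[|m]]; rewrite ?mulr0 ?subrr ?addr0.
case: m => [|[|m]] /=; rewrite ?add0n ?addSn ?add0n.
- by rewrite subr0 addr0.
- by rewrite beta_rec addr0; ring.
- by rewrite (beta_rec (m + n).+1); ring.
Qed.

Lemma coef_B_series_numerator m k :
  ((c%:S - d *: 'x - (d ^+ 2) *: ('x * 'y)) * B_series beta j + kappa%:S)%F m k =
  match m with
  | 0 => c * beta (k + j) ^+ 2 + (if k == 0 then kappa else 0)
  | 1 => - (d * beta (k + j) ^+ 2)
         - (if k is k'.+1 then d ^+ 2 * beta (k' + j) ^+ 2 else 0)
  | _ => 0
  end.
Proof.
rewrite fps2_mulC !fps2_mulDr !fps2_mulNr !fps2_mulZr !fps2_const_monomial fps2_mulZr.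
rewrite fps2_X_monomial fps2_Y_monomial fps2_monomialM /fps2_add /fps2_opp /fps2_scale.
rewrite !coef_mul_monomial /B_series /fps2_monomial.
by case: m => [|[|m]]; case: k => [|k] /=; rewrite ?subn0 ?subn1 /=; ring.
Qed.

Theorem U_series_charpoly_identity :
  (U_series beta j * ((1%:S - c *: 'x + d *: ('x ^+ 2)) * (1%:S + d *: 'y)))%F
  = ('y ^+ j * (((c%:S - d *: 'x - (d ^+ 2) *: ('x * 'y)) * B_series beta j
                 + kappa%:S)))%F.
Proof.
apply: fps2_ext => m n.
rewrite coef_mul_mul_1DZy !coef_U_series_mul_charpoly.
rewrite fps2_Y_monomial fps2_monomialX mul0n mul1n coef_monomial_mul leq0n subn0.
rewrite coef_B_series_numerator.
have [lt_nj | /subnK <-] := ltnP n j.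
  by rewrite (leqNgt j n.-1) (leq_ltn_trans (leq_pred n) lt_nj) mulr0 if_same addr0 andbF.
move: (n - j)%N => k; rewrite andbT addnK.
case: k => [|k].
  by rewrite add0n; case: m => [|[|m]]; case: j => [|i] /=; rewrite ?ltnn /=; ring.
rewrite addSn /= leq_addl; case: m => [|[|m]] /=; rewrite ?(beta_rec (k + j)); ring.
Qed.

End UBSeriesIdentity.

Theorem proposition4p4 (R : numFieldType) (q : nat) (lambda : R)
    (beta : nat -> R)
    (hq1 : (1 < q)%N) (hqodd : odd q)
    (hbeta0 : beta 0%N = 1)
    (hrec : forall l : nat,
        q%:R * beta l.+2 - lambda * beta l.+1 + beta l = 0)
    (j : nat) :
  let qi := (q%:R : R)^-1 in
  (U_series beta j
     * ((1%:S - (lambda * qi) *: 'x + qi *: ('x ^+ 2)) * (1%:S + qi *: 'y)))%F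
  = ('y ^+ j
     * (((lambda * qi)%:S - qi *: 'x - (qi ^+ 2) *: ('x * 'y)) * B_series beta j
        + (beta j * beta j.+1 - lambda * qi * beta j ^+ 2)%:S))%F.
Proof.
move=> qi; apply: U_series_charpoly_identity => l.
have q_neq0 : (q%:R : R) != 0 by rewrite pnatr_eq0 -lt0n (ltn_trans _ hq1).
apply/eqP; rewrite -subr_eq0.
have -> : beta l.+2 - (lambda * qi * beta l.+1 - qi * beta l) =
          qi * (q%:R * beta l.+2 - lambda * beta l.+1 + beta l).
  by rewrite /qi; field.
by rewrite hrec mulr0.
Qed.
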